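(* Let $\mathsf K$ be a field of characteristic $0$ and let $F(X,Y)=f_n(X)Y^n+\dots+f_0(X)\in\mathsf K[X,Y]$ have $Y$-degree $n$, with $F(0,Y)$ not identically $0$. Suppose $\mathsf L$ is a finite extension of $\mathsf K$, $e_1,\dots,e_n$ are positive integers and $y_i=\sum_{k=\kappa_i}^\infty a_{ik}x^{k/e_i}\in\mathsf L((x^{1/e_i}))$ with $a_{i\kappa_i}\ne0$ ($i=1,\dots,n$) are such that $F(x,Y)=f_n(x)(Y-y_1)\cdots(Y-y_n)$. Let $$r=\min\Bigl\{i+j:\ \frac{\partial^{i+j}F}{\partial X^i\partial Y^j}(0,0)\neq 0\Bigr\}.$$ Then $$r=\sum_{i:\ \kappa_i>0}\min\{1,\kappa_i/e_i\},$$ the sum being over those $i$ with $\kappa_i>0$.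
   Context: $\mathsf L((x^{1/e}))$ denotes the field of formal Laurent series in $x^{1/e}$ with coefficients in $\mathsf L$ (a field containing $\mathsf K((x))$). *)

From HB Require Import structures.
From mathcomp Require Import all_boot all_order all_algebra all_field.
Set Implicit Arguments. Unset Strict Implicit. Unset Printing Implicit Defensive.
Import Order.TTheory GRing.Theory Num.Theory.
Local Open Scope ring_scope.

(* Formal Laurent series in a variable t over a ring L, represented as
   t^(lv s) * (sum_{m >= 0} lc s m t^m).  Two representations denote the same
   series iff they have the same coefficient function [lcoef]. *)
Record lser (L : nzRingType) := LSer { lv : int; lc : nat -> L }.

Section Laurent.
Variable L : nzRingType.

Definition lcoef (s : lser L) (z : int) : L :=
  if (lv s <= z)%R then lc s `|z - lv s|%N else 0.

Definition lser_eq (s1 s2 : lser L) : Prop := forall z, lcoef s1 z = lcoef s2 z.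

Definition lzero : lser L := LSer 0 (fun _ => 0).
Definition lone : lser L := LSer 0 (fun m => if m == 0%N then 1 else 0).
Definition lopp (s : lser L) : lser L := LSer (lv s) (fun m => - lc s m).
Definition ladd (s1 s2 : lser L) : lser L :=
  let v := Num.min (lv s1) (lv s2) in
  LSer v (fun m => lcoef s1 (v + m%:Z) + lcoef s2 (v + m%:Z)).
Definition lmul (s1 s2 : lser L) : lser L :=
  LSer (lv s1 + lv s2) (fun m => \sum_(i < m.+1) lc s1 i * lc s2 (m - i)).

(* [prodlin ys j] = coefficient of Y^j in prod_{y in ys} (Y - y),
   a polynomial in Y with Laurent-series coefficients. *)
Fixpoint prodlin (ys : seq (lser L)) (j : nat) : lser L :=
  match ys with
  | [::] => if j == 0%N then lone else lzero
  | y :: ys' =>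
      ladd (if j is j'.+1 then prodlin ys' j' else lzero)
           (lopp (lmul y (prodlin ys' j)))
  end.
End Laurent.

Section Embeddings.
Variables (K : fieldType) (L : fieldExtType K).

(* The polynomial p(x) in K[x] viewed in L((t)), t = x^(1/E). *)
Definition poly_lser (E : nat) (p : {poly K}) : lser L :=
  LSer 0 (fun m => if (E %| m)%N then (p`_(m %/ E))%:A else 0).

(* The Puiseux series  sum_{k >= kappa} a k x^(k/e)  in L((t)), t = x^(1/E),
   where e divides E. *)
Definition puiseux_lser (E e : nat) (kappa : int) (a : int -> L) : lser L :=
  let d := (E %/ e)%N in
  LSer (kappa * d%:Z) (fun m => if (d %| m)%N then a (kappa + (m %/ d)%N%:Z) else 0).
End Embeddings.

(* Bivariate polynomials: F : {poly {poly K}}, outer variable Y, inner X. *)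
Definition mixed_deriv_at0 (K : fieldType) (F : {poly {poly K}}) (i j : nat) : K :=
  ((map_poly (derivn i) (derivn j F)).[0]).[0].

Definition is_order_at0 (K : fieldType) (F : {poly {poly K}}) (r : nat) : Prop :=
  (exists i j, (i + j)%N = r /\ mixed_deriv_at0 F i j != 0) /\
  (forall i j, mixed_deriv_at0 F i j != 0 -> (r <= i + j)%N).

(* Work in L((t)) with t = x^(1/E), E the product of the e_i, so that
   v(y_i) = kappa_i E / e_i.  Give X the weight E and Y a weight w.  Since
   F_j = f_n * [Y^j] prod_i (Y - y_i) and the initial forms of the factors
   Y - y_i are nonzero, the weighted order of F is v(f_n) + sum_i min(w, v(y_i)).
   For w = 0 this order is 0 because F(0,Y) <> 0; for w = E it is E r, r the
   order of F at the origin (in characteristic 0 a mixed partial at the origin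
   is a nonzero multiple of the corresponding coefficient).  Subtracting gives
   E r = sum_i (min(E, v(y_i)) - min(0, v(y_i))). *)

From HB Require Import structures.
From mathcomp Require Import all_boot all_order all_algebra all_field.
From mathcomp Require Import zify ring.
Import Order.TTheory GRing.Theory Num.Theory.
Local Open Scope ring_scope.

Set Implicit Arguments. Unset Strict Implicit. Unset Printing Implicit Defensive.

Section LaurentSeries.
Variable L : nzRingType.
Implicit Types (s y : lser L) (ys : seq (lser L)).

Lemma lcoef_lvD s (k : nat) : lcoef s (lv s + k%:Z) = lc s k.
Proof. by rewrite /lcoef ler_wpDr // addrAC subrr add0r. Qed.

Lemma lcoef_lt_lv s z : z < lv s -> lcoef s z = 0.
Proof. by rewrite /lcoef ltNge => /negbTE ->. Qed.

Lemma lcoef_lzero z : lcoef (lzero L) z = 0.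
Proof. by rewrite /lcoef; case: ifP. Qed.

Lemma lcoef_lone z : lcoef (lone L) z = (z == 0)%:R.
Proof.
rewrite /lcoef /= subr0; have [->|z_neq0] := eqVneq z 0; first by [].
by case: ifP => // _; rewrite absz_eq0 (negbTE z_neq0).
Qed.

Lemma lcoef_lopp s z : lcoef (lopp s) z = - lcoef s z.
Proof. by rewrite /lcoef /=; case: ifP; rewrite ?oppr0. Qed.

Lemma lcoef_ladd s1 s2 z : lcoef (ladd s1 s2) z = lcoef s1 z + lcoef s2 z.
Proof.
rewrite {1}/lcoef /=; case: ifP => [le_min_z|].
  by rewrite gez0_abs ?subr_ge0 // subrKC.
rewrite ge_min => /negbT; rewrite negb_or -!ltNge => /andP[lt1 lt2].
by rewrite !lcoef_lt_lv ?addr0.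
Qed.

Lemma lcoef_lmul s1 s2 z : lv s1 + lv s2 <= z ->
  lcoef (lmul s1 s2) z = \sum_(i < `|(z - (lv s1 + lv s2))%R|%N.+1)
     lcoef s1 (lv s1 + (i : nat)%:Z) * lcoef s2 (z - (lv s1 + (i : nat)%:Z)).
Proof.
move=> le_z; rewrite /lcoef /= le_z; apply: eq_bigr => i _.
rewrite ler_wpDr // addrAC subrr add0r.
have := ltn_ord i; rewrite ltnS => le_i.
have -> : z - (lv s1 + (i : nat)%:Z) = lv s2 + (`|(z - (lv s1 + lv s2))%R|%N - i)%N%:Z.
  by lia.
by rewrite ler_wpDr // addrAC subrr add0r.
Qed.

Definition lval_ge s (o : int) := forall z, z < o -> lcoef s z = 0.

Lemma lval_ge_lv s : lval_ge s (lv s).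
Proof. by move=> z; apply: lcoef_lt_lv. Qed.

Lemma lval_ge_lmul s1 s2 o1 o2 :
  lval_ge s1 o1 -> lval_ge s2 o2 -> lval_ge (lmul s1 s2) (o1 + o2).
Proof.
move=> ge1 ge2 z lt_z; have [le_z|lt_lv] := lerP (lv s1 + lv s2) z; last first.
  by rewrite /lcoef /= leNgt lt_lv.
rewrite lcoef_lmul // big1 // => i _.
have [lt_i|le_i] := ltrP (lv s1 + (i : nat)%:Z) o1; first by rewrite ge1 ?mul0r.
by rewrite ge2 ?mulr0 //; lia.
Qed.

Lemma lcoef_lmul_lval s1 s2 o1 o2 : lval_ge s1 o1 -> lval_ge s2 o2 ->
  lcoef (lmul s1 s2) (o1 + o2) = lcoef s1 o1 * lcoef s2 o2.
Proof.
move=> ge1 ge2; have [le_o|lt_o] := lerP (lv s1 + lv s2) (o1 + o2); last first.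
  rewrite {1}/lcoef /= leNgt lt_o.
  have [lt1|le1] := ltrP o1 (lv s1); first by rewrite (lcoef_lt_lv lt1) mul0r.
  by rewrite (@lcoef_lt_lv s2) ?mulr0 //; lia.
have [lt1|le1] := ltrP o1 (lv s1).
  rewrite (lcoef_lt_lv lt1) mul0r lcoef_lmul // big1 // => i _.
  by rewrite ge2 ?mulr0 //; lia.
have [lt2|le2] := ltrP o2 (lv s2).
  rewrite (lcoef_lt_lv lt2) mulr0 lcoef_lmul // big1 // => i _.
  by rewrite ge1 ?mul0r //; have := ltn_ord i; lia.
have lt_k : (`|(o1 - lv s1)%R|%N < `|(o1 + o2 - (lv s1 + lv s2))%R|%N.+1)%N by lia.
rewrite lcoef_lmul // (bigD1 (Ordinal lt_k)) //= big1 ?addr0 => [|[i lt_i'] ne_i] /=.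
  by congr (lcoef _ _ * lcoef _ _); lia.
have [lt_i|le_i] := ltrP (lv s1 + i%:Z) o1; first by rewrite ge1 ?mul0r.
have ne_o1 : lv s1 + i%:Z != o1.
  by apply: contra ne_i => /eqP eq_o1; rewrite -val_eqE /=; apply/eqP; lia.
by rewrite ge2 ?mulr0 //; move/eqP: ne_o1; lia.
Qed.

Lemma lval_exists s : (exists k, lc s k != 0) ->
  exists2 o, lval_ge s o & lcoef s o != 0.
Proof.
case/ex_minnP=> k nz_k min_k; exists (lv s + k%:Z); last by rewrite lcoef_lvD.
move=> z lt_z; have [lt_lv|le_lv] := ltrP z (lv s); first exact: lcoef_lt_lv.
rewrite /lcoef le_lv; apply/eqP; apply: contraTT lt_z => /min_k le_k.
by rewrite -leNgt; lia.
Qed.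

Lemma prodlin_cons y ys j : prodlin (y :: ys) j =
  ladd (if j is j'.+1 then prodlin ys j' else lzero L) (lopp (lmul y (prodlin ys j))).
Proof. by []. Qed.

Lemma lcoef_prodlin_size_lt ys j z : (size ys < j)%N -> lcoef (prodlin ys j) z = 0.
Proof.
elim: ys j z => [|y ys IHys] [|j] z //= lt_j; first by rewrite lcoef_lzero.
rewrite lcoef_ladd lcoef_lopp IHys // (@lval_ge_lmul _ _ (lv y) (z - lv y + 1)).
- by rewrite oppr0 addr0.
- exact: (lval_ge_lv (s:=y)).
- by move=> z' _; rewrite IHys // (ltn_trans _ lt_j).
- by lia.
Qed.

End LaurentSeries.

Section WeightedOrder.
Variables (L : idomainType) (w : int).
Implicit Types (y : lser L) (ys : seq (lser L)).

Definition initial_form ys (m : int) : {poly L} :=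
  \poly_(j < (size ys).+1) lcoef (prodlin ys j) (m - w * j%:Z).

Lemma coef_initial_form ys m j :
  (initial_form ys m)`_j = lcoef (prodlin ys j) (m - w * j%:Z).
Proof.
rewrite coef_poly; case: ltnP => // le_j.
by rewrite lcoef_prodlin_size_lt.
Qed.

(* The initial form of [Y - y]: [Y] if [w < v(y)], [-c] if [v(y) < w] and
   [Y - c] if they are equal, [c] being the leading coefficient of [y]. *)
Definition initial_linear y : {poly L} :=
  (Num.min w (lv y) == w)%:R *: 'X - ((Num.min w (lv y) == lv y)%:R * lc y 0)%:P.

Lemma initial_linear_neq0 y : lc y 0 != 0 -> initial_linear y != 0.
Proof.
move=> nz_y; rewrite /initial_linear; have [eq_w|ne_w] := eqVneq (Num.min w (lv y)) w.
  rewrite scale1r; apply/eqP => /(congr1 (fun p : {poly L} => p`_1)).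
  by rewrite coefB coefX coefC coef0 subr0 => /eqP; rewrite oner_eq0.
have -> : Num.min w (lv y) = lv y.
  by move: ne_w; rewrite /Num.min; case: ifP; rewrite ?eqxx.
by rewrite eqxx scale0r sub0r oppr_eq0 polyC_eq0 mul1r.
Qed.

Section Cons.
Local Unset Implicit Arguments.
Variables (y : lser L) (ys : seq (lser L)) (m : int).
Hypothesis ys_ge : forall j, lval_ge (prodlin ys j) (m - w * j%:Z).
Let u := Num.min w (lv y).

Lemma prodlin_cons_lval_ge j : lval_ge (prodlin (y :: ys) j) (u + m - w * j%:Z).
Proof.
have le_uw : u <= w by rewrite ge_min lexx.
have le_uv : u <= lv y by rewrite ge_min lexx orbT.
move=> z lt_z; rewrite lcoef_ladd lcoef_lopp (lval_ge_lmul (lval_ge_lv (s:=y)) (ys_ge j)).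
  by case: j lt_z => [|j] lt_z; rewrite ?lcoef_lzero ?ys_ge ?oppr0 ?addr0 //; lia.
by lia.
Qed.

Lemma initial_form_cons :
  initial_form (y :: ys) (u + m) = initial_linear y * initial_form ys m.
Proof.
have le_uw : u <= w by rewrite ge_min lexx.
have le_uv : u <= lv y by rewrite ge_min lexx orbT.
apply/polyP => j; rewrite coef_initial_form mulrBl coefB -scalerAl coefZ coefXM coefCM.
rewrite prodlin_cons lcoef_ladd lcoef_lopp; congr (_ - _).
  case: j => [|j] /=; first by rewrite lcoef_lzero mulr0.
  rewrite -/u; have [eq_uw|ne_uw] := eqVneq u w.
    by rewrite mul1r coef_initial_form; congr lcoef; rewrite eq_uw; lia.
  rewrite mul0r ys_ge //; have : u < w by rewrite lt_neqAle ne_uw.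
  by lia.
rewrite coef_initial_form -/u; have [eq_uv|ne_uv] := eqVneq u (lv y).
  have -> : u + m - w * j%:Z = lv y + (m - w * j%:Z) by rewrite eq_uv; ring.
  by rewrite (lcoef_lmul_lval (lval_ge_lv (s:=y)) (ys_ge j)) -[lv y]addr0 lcoef_lvD mul1r.
have : u < lv y by rewrite lt_neqAle ne_uv.
by rewrite mul0r mul0r (lval_ge_lmul (lval_ge_lv (s:=y)) (ys_ge j)) //; lia.
Qed.

End Cons.

Lemma prodlin_weighted_order (I : Type) (f : I -> lser L) (s : seq I) :
  (forall i, lc (f i) 0 != 0) ->
  let m := \sum_(i <- s) Num.min w (lv (f i)) in
  (forall j, lval_ge (prodlin (map f s) j) (m - w * j%:Z)) /\
  initial_form (map f s) m != 0.
Proof.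
move=> nz_f; elim: s => [|i s [IHge IHnz]] /=.
  rewrite big_nil; split.
    by case=> [|j] z lt_z /=; rewrite ?lcoef_lzero // lcoef_lone; case: eqP => // eq_z; lia.
  apply/eqP => /(congr1 (fun p : {poly L} => p`_0)).
  by rewrite coef_initial_form /= lcoef_lone coef0 mulr0 eqxx => /eqP; rewrite oner_eq0.
rewrite big_cons; split; first exact: prodlin_cons_lval_ge.
by rewrite initial_form_cons // mulf_neq0 ?initial_linear_neq0.
Qed.

End WeightedOrder.

(* [(F`_j)`_i] is the coefficient of [X^i Y^j]. *)
Definition weighted_order (K : fieldType) (F : {poly {poly K}}) (wx wy o : int) :=
  (exists i j, (F`_j)`_i != 0 /\ wx * i%:Z + wy * j%:Z = o) /\
  (forall i j, (F`_j)`_i != 0 -> o <= wx * i%:Z + wy * j%:Z).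

Section OrderAtOrigin.
Variables (K : fieldType) (F : {poly {poly K}}).

Lemma mixed_deriv_at0E i j : mixed_deriv_at0 F i j = (F`_j)`_i *+ j`! *+ i`!.
Proof.
rewrite /mixed_deriv_at0 !horner_coef0.
rewrite coef_map_id0; last by rewrite derivn_poly0 // size_poly0.
by rewrite coef_derivn addn0 ffactnn coef_derivn addn0 ffactnn coefMn.
Qed.

Lemma mixed_deriv_at0_neq0 i j : [pchar K] =i pred0 ->
  (mixed_deriv_at0 F i j != 0) = ((F`_j)`_i != 0).
Proof.
move=> /pcharf0P char0; rewrite mixed_deriv_at0E -mulrnA -mulr_natr mulf_eq0.
by rewrite char0 muln_eq0 !eqn0Ngt !fact_gt0 !orbF.
Qed.

Lemma weighted_order_order_at0 (E : nat) o : [pchar K] =i pred0 -> (0 < E)%N ->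
  weighted_order F E%:Z E%:Z o -> exists r : nat, o = r%:Z * E%:Z /\ is_order_at0 F r.
Proof.
move=> char0 E_gt0 [[i [j [nz_ij <-]]] min_o]; exists (i + j)%N; split; first by lia.
split; first by exists i, j; rewrite mixed_deriv_at0_neq0.
move=> i' j'; rewrite mixed_deriv_at0_neq0 // => /min_o; nia.
Qed.

Lemma weighted_order_wy0 (wx o : int) : 0 <= wx ->
  map_poly (fun p : {poly K} => p.[0]) F != 0 -> weighted_order F wx 0 o -> o = 0.
Proof.
move=> wx_ge0 nzF0 [[i [j [_ <-]]] min_o].
have [j0 nz_j0] : exists j, (F`_j)`_0 != 0.
  exists (size (map_poly (fun p : {poly K} => p.[0]) F)).-1.
  by move: nzF0; rewrite -lead_coef_eq0 lead_coefE coef_map_id0 ?horner0 // horner_coef0.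
by have := min_o _ _ nz_j0; nia.
Qed.

End OrderAtOrigin.

Section Factorization.
Variables (K : fieldType) (L : fieldExtType K) (E : nat).
Hypothesis E_gt0 : (0 < E)%N.

Lemma alg_eq0 (x : K) : ((x%:A : L) == 0) = (x == 0).
Proof. by rewrite scaler_eq0 oner_eq0 orbF. Qed.

Lemma lcoef_poly_lser_mul (q : {poly K}) (i : nat) :
  lcoef (poly_lser L E q) (E * i)%N%:Z = (q`_i)%:A.
Proof. by rewrite /lcoef /= addn0 dvdn_mulr // mulKn. Qed.

Lemma lcoef_poly_lser_neq0 (q : {poly K}) z : lcoef (poly_lser L E q) z != 0 ->
  exists2 i, z = (E * i)%N%:Z & q`_i != 0.
Proof.
rewrite /lcoef /= subr0; case: ifP => [z_ge0|]; last by rewrite eqxx.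
case: ifP => [dvd_z|]; last by rewrite eqxx.
by rewrite alg_eq0; exists (`|z| %/ E)%N => //; rewrite mulnC divnK // gez0_abs.
Qed.

Lemma poly_lser_lval_exists (q : {poly K}) : q != 0 ->
  exists2 o, lval_ge (poly_lser L E q) o & lcoef (poly_lser L E q) o != 0.
Proof.
move=> nz_q; apply: lval_exists; exists (E * (size q).-1)%N => /=.
by rewrite dvdn_mulr // mulKn // alg_eq0 -lead_coefE lead_coef_eq0.
Qed.

Lemma factorization_weighted_order (F : {poly {poly K}}) (I : Type)
    (f : I -> lser L) (s : seq I) (o w : int) :
  (forall i, lc (f i) 0 != 0) ->
  (forall j, lser_eq (poly_lser L E F`_j)
               (lmul (poly_lser L E (lead_coef F)) (prodlin (map f s) j))) ->
  lval_ge (poly_lser L E (lead_coef F)) o ->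
  lcoef (poly_lser L E (lead_coef F)) o != 0 ->
  weighted_order F E%:Z w (o + \sum_(i <- s) Num.min w (lv (f i))).
Proof.
move=> nz_f factF ge_o nz_o; have [ge_m nz_init] := prodlin_weighted_order w s nz_f.
set m := \sum_(i <- s) _ in ge_m nz_init *.
have ge_Fj j : lval_ge (poly_lser L E F`_j) (o + (m - w * j%:Z)).
  by move=> z lt_z; rewrite factF (lval_ge_lmul ge_o (ge_m j)).
split.
  set j := (size (initial_form w (map f s) m)).-1.
  have nz_j : lcoef (poly_lser L E F`_j) (o + (m - w * j%:Z)) != 0.
    rewrite factF (lcoef_lmul_lval ge_o (ge_m j)) mulf_neq0 //.
    by rewrite -coef_initial_form -lead_coefE lead_coef_eq0.
  by have [i eq_i nz_ij] := lcoef_poly_lser_neq0 nz_j; exists i, j; split => //; lia.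
move=> i j; rewrite leNgt -alg_eq0 -lcoef_poly_lser_mul; apply: contraNN => lt_ij.
by rewrite ge_Fj //; lia.
Qed.

End Factorization.

Lemma puiseux_order_term (R : realFieldType) (d e : nat) (k : int) :
  (0 < d)%N -> (0 < e)%N ->
  ((Num.min (d * e)%N%:Z (k * d%:Z) - Num.min 0 (k * d%:Z))%:~R : R) =
  (if 0 < k then Num.min 1 (k%:~R / e%:R) else 0) * (d * e)%:R.
Proof.
move=> d_gt0 e_gt0; case: ifP => [k_gt0|k_le0]; last first.
  by rewrite mul0r !min_r ?subrr //; nia.
rewrite (@min_l _ _ 0) ?subr0; last by nia.
have e_pos : (0 : R) < e%:R by rewrite ltr0n.
have e_int : (e%:R : R) = e%:Z%:~R by [].
have [le_de|lt_kd] := leP (d * e)%N%:Z (k * d%:Z).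
  rewrite min_l ?mul1r //.
  by rewrite ler_pdivlMr // mul1r e_int ler_int; nia.
rewrite min_r; last first.
  rewrite ltW // ltr_pdivrMr // mul1r e_int ltr_int.
  by move: lt_kd; rewrite PoszM [d%:Z * _]mulrC ltr_pM2r // ltz_nat.
by rewrite intrM natrM -pmulrn mulrCA divfK 1?mulrC // gt_eqF.
Qed.

Theorem mainTheorem6 (K : fieldType) (L : fieldExtType K) (F : {poly {poly K}})
    (n : nat) (e : 'I_n -> nat) (kappa : 'I_n -> int) (a : 'I_n -> int -> L) :
  [pchar K] =i pred0 ->
  size F = n.+1 ->
  map_poly (fun p : {poly K} => p.[0]) F != 0 ->
  (forall i, (0 < e i)%N) ->
  (forall i, a i (kappa i) != 0) ->
  (forall i k, k < kappa i -> a i k = 0) ->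
  (let E := (\prod_(i < n) e i)%N in
   forall j : nat,
     lser_eq (poly_lser L E F`_j)
       (lmul (poly_lser L E (lead_coef F))
             (prodlin [seq puiseux_lser E (e i) (kappa i) (a i) | i <- enum 'I_n] j))) ->
  exists r : nat, is_order_at0 F r /\
    r%:R = \sum_(i < n | 0 < kappa i) Num.min 1 ((kappa i)%:~R / (e i)%:R : rat).
Proof.
(* The truncation hypothesis on [a] is built into [puiseux_lser]. *)
move=> char0 sizeF nzF0 e_gt0 nz_a _ /=; set E := (\prod_(i < n) e i)%N => factF.
have E_gt0 : (0 < E)%N by apply: prodn_gt0.
have E_dvd i : (e i %| E)%N by rewrite /E (bigD1 i) //= dvdn_mulr.
set f := fun i => puiseux_lser E (e i) (kappa i) (a i).
have nz_f i : lc (f i) 0 != 0 by rewrite /f /= dvdn0 div0n addr0.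
have nz_lead : lead_coef F != 0 by rewrite lead_coef_eq0 -size_poly_eq0 sizeF.
have [o ge_o nz_o] := poly_lser_lval_exists L E_gt0 nz_lead.
have ordF w := factorization_weighted_order E_gt0 w nz_f factF ge_o nz_o.
have ord0 := weighted_order_wy0 (le0z_nat E) nzF0 (ordF 0).
have [r [ordE order_r]] := weighted_order_order_at0 char0 E_gt0 (ordF E%:Z).
exists r; split => //.
have E_neq0 : E%:R != 0 :> rat by rewrite pnatr_eq0 -lt0n.
apply: (mulIf E_neq0).
have -> : r%:R * E%:R = (\sum_(i <- enum 'I_n)
    (Num.min E%:Z (lv (f i)) - Num.min 0 (lv (f i))))%:~R :> rat.
  rewrite !pmulrn -intrM -ordE sumrB; congr _%:~R.
  by rewrite -[o](addrK (\sum_(i <- enum 'I_n) Num.min 0 (lv (f i)))) ord0 sub0r addrC.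
rewrite rmorph_sum [X in _ = X * _]big_mkcond mulr_suml big_enum /=.
apply: eq_bigr => i _; have := @puiseux_order_term rat (E %/ e i) (e i) (kappa i).
by rewrite divnK // divn_gt0 // dvdn_leq //; apply.
Qed.
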